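(* Let $n\ge2$ and let $\mathsf r=[r_1,\dots,r_{2n-2}]$ be a tree-like factorization of $\lambda_n$, written as $r_\ell=(\!(a_{\ell-1},a_\ell)\!)$ with integers $a_0<a_1<\dots<a_{2n-2}$. Let $k\in\{1,\dots,n-1\}$. Then: (i) if $r_\ell$ occurs strictly before $r^k_1$ or strictly after $r^k_2$ in the sequence, then $a_{\ell-1}\not\equiv k$ and $a_\ell\not\equiv k\pmod n$; (ii) if $r_\ell$ occurs strictly between $r^k_1$ and $r^k_2$, then $a_{\ell-1}\not\equiv \beta_k$ and $a_\ell\not\equiv\beta_k\pmod n$; (iii) $r_\ell=(\!(a_{\ell-1},a_\ell)\!)$ occurs strictly between $r^k_1$ and $r^k_2$ if and only if the reflection $(\!(a_\ell-n,a_{\ell-1})\!)$ also occurs in $\mathsf r$ strictly between $r^k_1$ and $r^k_2$.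
   Context: The affine symmetric group $\widetilde S_n$ is the group, under composition $(vw)(k)=v(w(k))$, of bijections $w:\mathbb Z\to\mathbb Z$ with $w(i+n)=w(i)+n$ and $\sum_{i=1}^n w(i)=\binom{n+1}{2}$. For $i\not\equiv j\pmod n$, $(\!(i,j)\!)$ is the affine reflection interchanging $i+kn$ and $j+kn$ for all $k\in\mathbb Z$; $(\!(i,j)\!)=(\!(j,i)\!)=(\!(i+kn,j+kn)\!)$. Let $\lambda_n$ be the element with $\lambda_n(k)=k+n$ for $k\not\equiv0\pmod n$ and $\lambda_n(k)=k-n(n-1)$ for $k\equiv 0\pmod n$; its reflection length is $2n-2$. $\textsc{fact}(\lambda_n)$ is the set of sequences $[r_1,\dots,r_{2n-2}]$ of reflections with $r_1\cdots r_{2n-2}=\lambda_n$. Such a sequence is tree-like if one can write $r_k=(\!(a_{k-1},b_k)\!)$ with integers $a_{k-1}<b_k$ ($1\le k\le 2n-2$) and $a_k\equiv b_k\pmod n$ ($1\le k\le 2n-3$); equivalently there are integers $a_0<\dots<a_{2n-2}$ with $r_\ell=(\!(a_{\ell-1},a_\ell)\!)$. A reflection $r_\ell$ increases an integer $k$ if $r_\ell r_{\ell+1}\cdots r_{2n-2}(k)>r_{\ell+1}\cdots r_{2n-2}(k)$. For a tree-like $\mathsf r$ and $k\in\{1,\dots,n-1\}$, exactly two reflections of $\mathsf r$ increase $k$; $r^k_1$ denotes the earlier and $r^k_2$ the later of these two in the sequence. Each of them has exactly one endpoint congruent to $k$ modulo $n$, and the other endpoints of $r^k_1$ and $r^k_2$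 are congruent to each other modulo $n$; $\beta_k$ denotes this common residue class modulo $n$. *)

From mathcomp Require Import all_boot all_order all_algebra.
Set Implicit Arguments. Unset Strict Implicit. Unset Printing Implicit Defensive.
Import Order.TTheory GRing.Theory Num.Theory.
Local Open Scope ring_scope.

Definition congr (n : nat) (x y : int) : Prop := (x = y %[mod n%:Z])%Z.

(* The affine reflection ((i,j)) of Z (for i, j not congruent mod n):
   interchanges i + k n and j + k n for all k, fixes everything else. *)
Definition arefl (n : nat) (i j : int) (x : int) : int :=
  if ((x - i) %% n%:Z)%Z == 0 then x - i + j
  else if ((x - j) %% n%:Z)%Z == 0 then x - j + i
  else x.

Definition lam (n : nat) (x : int) : int :=
  if (x %% n%:Z)%Z == 0 then x - (n * (n - 1))%N%:Z else x + n%:Z.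

Definition flen (n : nat) : nat := (2 * n - 2)%N.

(* Given a : nat -> int, the sequence of reflections r_l = ((a_{l-1}, a_l)),
   1 <= l <= 2n-2. *)
Definition rr (n : nat) (a : nat -> int) (l : nat) : int -> int :=
  arefl n (a l.-1) (a l).

(* Partial product r_l r_{l+1} ... r_{2n-2} (composition, rightmost applied
   first); for l > 2n-2 it is the identity. *)
Definition prod_from (n : nat) (a : nat -> int) (l : nat) (x : int) : int :=
  foldr (fun j acc => rr n a j acc) x (iota l ((flen n).+1 - l)).

Definition increases (n : nat) (a : nat -> int) (l : nat) (x : int) : Prop :=
  prod_from n a (l.+1) x < prod_from n a l x.

From mathcomp Require Import all_boot all_order all_algebra.
From mathcomp Require Import zify.
Import Order.TTheory GRing.Theory Num.Theory.
Local Open Scope ring_scope.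

(* Read r_l r_{l+1} ... r_{2n-2} x as moving x through the steps l = 2n-2, ..., 1.
   The class of a_{2n-2} walks down the chain a_{2n-2}, ..., a_0, so lambda_n forces
   a_{2n-2} = 0 mod n; by injectivity mod n, any other x is moved only upwards, by
   a_l - a_{l-1}, exactly when it lies in the class of a_{l-1}.  Since lambda_n adds n
   to such an x and no single jump equals n, every class k in 1..n-1 is increased at
   least twice, while each step increases at most one class; with only 2n-2 steps,
   each k is increased exactly twice, at steps p1(k) < p2(k), and the reflection at
   either of these steps is ((a_l - n, a_{l-1})) for l the other one.  Making beta_k (the
   class of a_{p2(k)}) the parent of k turns the classes into a tree rooted at 0 in
   which k is an ancestor of the class of a_m iff p1(k) <= m < p2(k).  So the
   intervals [p1(k), p2(k)) are laminar, which gives (iii); (i) and (ii) say that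
   a_m = k only inside the interval of k and a_m = beta_k never inside it. *)

(** * Affine reflections modulo n *)

Lemma congrP n x y : congr n x y <-> exists z, x = y + z * n%:Z.
Proof.
rewrite /congr; split.
  by move/eqP; rewrite eqz_mod_dvd => /dvdzP [q hq]; exists q; lia.
by move=> [z ->]; apply/eqP; rewrite eqz_mod_dvd; apply/dvdzP; exists z; lia.
Qed.

Lemma congr_sym {n x y} : congr n x y -> congr n y x.
Proof. by rewrite /congr => ->. Qed.

Lemma congr_trans {n x y w} : congr n x y -> congr n y w -> congr n x w.
Proof. by rewrite /congr => ->. Qed.

Lemma congr_addMn n x z : congr n (x + z * n%:Z) x.
Proof. by apply/congrP; exists z. Qed.

Lemma modz_sub_eq0 n u v : (((u - v) %% n%:Z)%Z == 0) = (u == v %[mod n%:Z])%Z.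
Proof. by rewrite eqz_mod_dvd; apply/idP/idP => [/eqP/dvdz_mod0P|/dvdz_mod0P/eqP]. Qed.

Variant arefl_spec n i j x : int -> Prop :=
  | AreflL of congr n x i : arefl_spec n i j x (x - i + j)
  | AreflR of ~ congr n x i & congr n x j : arefl_spec n i j x (x - j + i)
  | AreflFix of ~ congr n x i & ~ congr n x j : arefl_spec n i j x x.

Lemma areflP n i j x : arefl_spec n i j x (arefl n i j x).
Proof.
rewrite /arefl !modz_sub_eq0.
by case: eqP => [/AreflL //|xi]; case: eqP => xj; [apply: AreflR | apply: AreflFix].
Qed.

Lemma arefl_shift n i j x z :
  arefl n i j (x + z * n%:Z) = arefl n i j x + z * n%:Z.
Proof.
rewrite /arefl.
have -> : x + z * n%:Z - i = z * n%:Z + (x - i) by lia.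
have -> : x + z * n%:Z - j = z * n%:Z + (x - j) by lia.
by rewrite !modzMDl; case: ifP => _; [|case: ifP => _]; lia.
Qed.

Lemma arefl_shift_ends n i j x z :
  arefl n (i + z * n%:Z) (j + z * n%:Z) x = arefl n i j x.
Proof.
rewrite /arefl.
have -> : x - (i + z * n%:Z) = (- z) * n%:Z + (x - i) by lia.
have -> : x - (j + z * n%:Z) = (- z) * n%:Z + (x - j) by lia.
by rewrite !modzMDl; case: ifP => _; [|case: ifP => _]; lia.
Qed.

Lemma arefl_l n i j : arefl n i j i = j.
Proof. by case: areflP => [_|[]|[]] //; rewrite subrr add0r. Qed.

Lemma arefl_r n i j : ~ congr n i j -> arefl n i j j = i.
Proof. by move=> nij; case: areflP => [/congr_sym //|_ _|_ []] //; rewrite subrr add0r. Qed.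

Lemma arefl_congr n i j x y :
  congr n x y -> congr n (arefl n i j x) (arefl n i j y).
Proof. by move=> /congrP [z ->]; rewrite arefl_shift; apply: congr_addMn. Qed.

Lemma congr_subD {n x i} j : congr n x i -> congr n (x - i + j) j.
Proof. by move=> /congrP [z ->]; apply/congrP; exists z; lia. Qed.

Lemma areflK n i j : ~ congr n i j -> involutive (arefl n i j).
Proof.
move=> nij x; have nji : ~ congr n j i by move/congr_sym.
case: (areflP n i j x) => [xi|_ xj|xi xj]; case: areflP => [yi|_ yj|yi yj]; try lia.
- by case: nji; apply: congr_trans (congr_sym (congr_subD j xi)) yi.
- by case: yj; apply: congr_subD.
- by case: nij; apply: congr_trans (congr_sym (congr_subD i xj)) yj.
- by case: yi; apply: congr_subD.
- by case: xi.
- by case: xj.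
Qed.

Lemma arefl_congr_inj {n i j x y} : ~ congr n i j ->
  congr n (arefl n i j x) (arefl n i j y) -> congr n x y.
Proof. by move=> nij /(@arefl_congr n i j); rewrite !areflK. Qed.

Lemma congr_small {n v w} : (v < n)%N -> (w < n)%N -> congr n v%:Z w%:Z -> v = w.
Proof. by move=> vn wn; rewrite /congr !modz_small; lia. Qed.

Lemma lam_neq0 n x : ~ congr n x 0 -> lam n x = x + n%:Z.
Proof. by rewrite /lam /congr mod0z; case: eqP. Qed.

Definition residue (n : nat) (x : int) : nat := `|(x %% n%:Z)%Z|%N.

Lemma congr_residue {n x y} : (0 < n)%N -> congr n x y <-> residue n x = residue n y.
Proof.
rewrite /congr /residue => n_gt0; have n0 : n%:Z != 0 by lia.
by have := modz_ge0 x n0; have := modz_ge0 y n0; split => [->|]; lia.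
Qed.

Lemma residue_small n v : (v < n)%N -> residue n v%:Z = v.
Proof. by move=> vn; rewrite /residue modz_small //; lia. Qed.

Lemma residue_ltn {n} x : (0 < n)%N -> (residue n x < n)%N.
Proof. by move=> n_gt0; rewrite /residue; have := ltz_pmod x (_ : 0 < n%:Z); lia. Qed.

Lemma congr_residue_small {n x v} : (v < n)%N -> congr n x v%:Z <-> residue n x = v.
Proof. by move=> vn; rewrite congr_residue ?residue_small //; lia. Qed.

Lemma sum_leq_eq (I : eqType) (r : seq I) (F G : I -> nat) :
  {in r, forall i, F i <= G i}%N -> (\sum_(i <- r) G i <= \sum_(i <- r) F i)%N ->
  {in r, forall i, F i = G i}.
Proof.
elim: r => // x r IH FG; rewrite !big_cons => sum_le i.
have FGr : {in r, forall i, F i <= G i}%N by move=> j jr; apply: FG; rewrite inE jr orbT.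
have := FG x (mem_head x r); have : (\sum_(j <- r) F j <= \sum_(j <- r) G j)%N.
  by rewrite big_seq [leqRHS]big_seq; apply: leq_sum => j /FGr.
rewrite inE => sumFG FGx /predU1P [->|ir]; first lia.
by apply: IH => //; lia.
Qed.

(** * Moving integers through a tree-like factorization *)

Section TreeLikeFactorization.

Context {n : nat} {a : nat -> int}.
Hypothesis n_ge2 : (2 <= n)%N.
Hypothesis a_incr : forall l, (l < flen n)%N -> a l < a l.+1.
Hypothesis a_refl : forall l, (1 <= l <= flen n)%N -> ~ congr n (a l.-1) (a l).
Hypothesis prod_lam : forall x, prod_from n a 1 x = lam n x.

Let n_gt0 : (0 < n)%N := ltnW n_ge2.

Local Notation L := (flen n).
Local Notation P := (prod_from n a).
Local Notation inc t x := (P t.+1 x < P t x).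
Local Notation res := (residue n).

Lemma prod_from_end x : P L.+1 x = x.
Proof. by rewrite /prod_from subnn. Qed.

Lemma prod_from_step t x : (t <= L)%N -> P t x = rr n a t (P t.+1 x).
Proof. by move=> tL; rewrite /prod_from subSn // subSS. Qed.

Lemma prod_from_congr_inj t x y :
  (1 <= t)%N -> congr n (P t x) (P t y) -> congr n x y.
Proof.
rewrite /prod_from => t_ge1; have : all (fun j => 1 <= j <= L)%N (iota t (L.+1 - t)).
  by apply/allP => j; rewrite mem_iota; lia.
elim: (iota _ _) => //= j s IH /andP [jL sL] /(arefl_congr_inj (a_refl _ jL)).
exact: IH.
Qed.

Lemma prod_from_aL t : (1 <= t <= L.+1)%N -> P t (a L) = a t.-1.
Proof.
move=> /andP [t_ge1 tL]; have : (L.+1 - t <= L)%N by lia.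
rewrite -(subKn tL); elim: (L.+1 - t)%N => [|d IH] dL.
  by rewrite subn0 prod_from_end.
rewrite prod_from_step; last by lia.
have -> : (L.+1 - d.+1).+1 = (L.+1 - d)%N by lia.
rewrite IH; last by lia.
have -> : (L.+1 - d).-1 = (L.+1 - d.+1)%N by lia.
by rewrite /rr arefl_r //; apply: a_refl; lia.
Qed.

Lemma a_lt i j : (i < j <= L)%N -> a i < a j.
Proof.
move=> /andP [+ jL]; elim: j jL => // j IH jL; rewrite ltnS leq_eqVlt.
case/predU1P => [-> | ij]; first exact: a_incr.
exact: lt_trans (IH (ltnW jL) ij) (a_incr _ jL).
Qed.

Lemma aL_congr0 : congr n (a L) 0.
Proof.
have lt0L : a 0 < a L by apply: a_lt; rewrite /flen; lia.
have := prod_lam (a L); rewrite prod_from_aL /lam; last by rewrite /flen; lia.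
by rewrite /congr mod0z; case: eqP => //= _; lia.
Qed.

Variant step_spec x t : bool -> Prop :=
  | StepUp of congr n (P t.+1 x) (a t.-1) & P t x = P t.+1 x + (a t - a t.-1) :
      step_spec x t true
  | StepStay of ~ congr n (P t.+1 x) (a t.-1) & P t x = P t.+1 x :
      step_spec x t false.

Lemma stepP {x t} : ~ congr n x 0 -> (1 <= t <= L)%N -> step_spec x t (inc t x).
Proof.
move=> x_neq0 tL; have := @prod_from_step t x; rewrite /rr => /(_ ltac:(lia)).
case: areflP => [up|_ at_t|stay _] E; rewrite E.
- have -> : P t.+1 x < P t.+1 x - a t.-1 + a t by have := @a_lt t.-1 t; lia.
  by constructor => //; lia.
- case: x_neq0; apply: congr_trans aL_congr0; apply: (@prod_from_congr_inj t.+1) => //.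
  by rewrite prod_from_aL /=; [exact: at_t | lia].
- by rewrite ltxx; constructor.
Qed.

Lemma step_up {x t} : ~ congr n x 0 -> (1 <= t <= L)%N -> inc t x ->
  congr n (P t.+1 x) (a t.-1) /\ P t x = P t.+1 x + (a t - a t.-1).
Proof. by move=> x_neq0 tL; case: (stepP x_neq0 tL). Qed.

Lemma step_stay {x t} : ~ congr n x 0 -> (1 <= t <= L)%N -> ~~ inc t x ->
  ~ congr n (P t.+1 x) (a t.-1) /\ P t x = P t.+1 x.
Proof. by move=> x_neq0 tL; case: (stepP x_neq0 tL). Qed.

Lemma prod_from_const x t1 t2 : ~ congr n x 0 -> (1 <= t1 <= t2)%N ->
  (t2 <= L.+1)%N -> (forall t, (t1 <= t < t2)%N -> ~~ inc t x) ->
  P t1 x = P t2 x.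
Proof.
move=> x_neq0 /andP [t1_ge1]; elim: t2 => [|t2 IH] t12 t2L stay; first lia.
have [->//|t12'] := eqVneq t1 t2.+1.
rewrite IH; [|lia|lia|by move=> t tt2; apply: stay; lia].
by case: (step_stay x_neq0 _ (stay t2 _)) => //; lia.
Qed.

Definition incs (v : nat) : seq nat := [seq t <- index_iota 1 L.+1 | inc t v%:Z].

Lemma mem_incs v t : (t \in incs v) = (1 <= t <= L)%N && inc t v%:Z.
Proof. by rewrite mem_filter mem_index_iota andbC ltnS. Qed.

Lemma not_congr0 {v} : (0 < v < n)%N -> ~ congr n v%:Z 0.
Proof. by move=> /andP [v_gt0 vn] /(@congr_small n v 0); lia. Qed.

Lemma inc_uniq {t v w} : (1 <= t <= L)%N -> (0 < v < n)%N -> (0 < w < n)%N ->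
  inc t v%:Z -> inc t w%:Z -> v = w.
Proof.
move=> tL vn wn /(step_up (not_congr0 vn) tL) [vt _] /(step_up (not_congr0 wn) tL) [wt _].
apply: (@congr_small n); [lia|lia|].
by apply: (@prod_from_congr_inj t.+1) => //; apply: congr_trans vt (congr_sym wt).
Qed.

Lemma sum_jumps_incs {v} : (0 < v < n)%N -> \sum_(t <- incs v) (a t - a t.-1) = n%:Z.
Proof.
move=> vn; rewrite big_filter big_mkcond /=.
rewrite (telescope_sumr_eq (fun t => - P t v%:Z)) //.
  by rewrite prod_from_end prod_lam lam_neq0; [lia | exact: not_congr0].
move=> t tL; case: (stepP (not_congr0 vn) tL) => _ ->; lia.
Qed.

Lemma size_incs_ge2 {v} : (0 < v < n)%N -> (2 <= size (incs v))%N.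
Proof.
move=> vn; have := sum_jumps_incs vn; have := mem_incs v.
case: (incs v) => [|t [|? ?]] //= mem; rewrite ?big_nil ?big_seq1; first lia.
have /andP [tL _] : (1 <= t <= L)%N && inc t v%:Z by rewrite -mem inE.
move=> jump; case: (a_refl _ tL); apply/congr_sym/congrP; exists 1; lia.
Qed.

Definition movers (t : nat) : seq nat := [seq v <- index_iota 1 n | inc t v%:Z].

Lemma size_movers_le1 {t} : (1 <= t <= L)%N -> (size (movers t) <= 1)%N.
Proof.
move=> tL; rewrite size_filter.
have [/hasP [v vin vinc]|] := boolP (has (fun v => inc t v%:Z) (index_iota 1 n)).
  rewrite (@eq_in_count _ _ (pred1 v)) ?count_uniq_mem ?iota_uniq ?leq_b1 //.
  move=> w win /=; apply/idP/eqP => [winc|->//].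
  by apply: (inc_uniq tL); move: win vin; rewrite !mem_index_iota //; lia.
by rewrite has_count; lia.
Qed.

Lemma sum_size_incs :
  (\sum_(1 <= v < n) size (incs v) = \sum_(1 <= t < L.+1) size (movers t))%N.
Proof.
under eq_bigr do rewrite size_filter -sum1_count.
rewrite (exchange_big_dep predT) //=.
by apply: eq_bigr => t _; rewrite size_filter -sum1_count.
Qed.

Lemma sum_size_movers_le : (\sum_(1 <= t < L.+1) size (movers t) <= L)%N.
Proof.
apply: (@leq_trans (\sum_(1 <= t < L.+1) 1)); last by rewrite sum_nat_const_nat; lia.
rewrite big_seq [leqRHS]big_seq.
by apply: leq_sum => t; rewrite mem_index_iota => tL; apply: size_movers_le1; lia.
Qed.

Lemma size_incs {v} : (0 < v < n)%N -> size (incs v) = 2.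
Proof.
move=> vn; symmetry.
apply: (@sum_leq_eq _ (index_iota 1 n) (fun=> 2%N) (fun w => size (incs w))).
- by move=> w; rewrite mem_index_iota => wn; apply: size_incs_ge2; lia.
- rewrite sum_size_incs sum_nat_const_nat.
  by apply: leq_trans sum_size_movers_le _; rewrite /flen; lia.
- by rewrite mem_index_iota; lia.
Qed.

Lemma size_movers {t} : (1 <= t <= L)%N -> size (movers t) = 1.
Proof.
move=> tL; apply: (@sum_leq_eq _ (index_iota 1 L.+1) (fun u => size (movers u)) (fun=> 1%N)).
- by move=> u; rewrite mem_index_iota => uL; apply: size_movers_le1; lia.
- rewrite -sum_size_incs sum_nat_const_nat big_seq (eq_bigr (fun=> 2%N)).
    by rewrite -big_seq sum_nat_const_nat /flen; lia.
  by move=> v; rewrite mem_index_iota => vn; apply: size_incs; lia.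
- by rewrite mem_index_iota; lia.
Qed.

Definition inc1 (v : nat) : nat := nth 0 (incs v) 0.
Definition inc2 (v : nat) : nat := nth 0 (incs v) 1.

Lemma incs_pair v : (0 < v < n)%N -> incs v = [:: inc1 v; inc2 v].
Proof. by move/size_incs; rewrite /inc1 /inc2; case: (incs v) => [|? [|? []]]. Qed.

Lemma inc12 {v} : (0 < v < n)%N -> [/\ 1 <= inc1 v, inc1 v < inc2 v & inc2 v <= L]%N.
Proof.
move=> vn; have : sorted ltn (incs v).
  by apply: sorted_filter; [exact: ltn_trans | exact: iota_ltn_sorted].
move: (mem_incs v (inc1 v)) (mem_incs v (inc2 v)); rewrite incs_pair //=.
rewrite !inE !eqxx orbT andbT => /esym/andP [? _] /esym/andP [? _] ?.
by split; lia.
Qed.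

Lemma incE {v t} : (0 < v < n)%N -> (1 <= t <= L)%N ->
  inc t v%:Z = (t == inc1 v) || (t == inc2 v).
Proof. by move=> vn tL; rewrite -[LHS]andTb -tL -mem_incs incs_pair // !inE. Qed.

Definition mover (t : nat) : nat := head 0 (movers t).

Lemma moverP {t} : (1 <= t <= L)%N -> (0 < mover t < n)%N && inc t (mover t)%:Z.
Proof.
move=> tL; have : mover t \in movers t.
  by rewrite /mover; case: (movers t) (size_movers tL) => // ? ?; rewrite inE eqxx.
by rewrite mem_filter mem_index_iota andbC.
Qed.

Lemma mover_inc {t v} : (1 <= t <= L)%N -> (0 < v < n)%N -> inc t v%:Z -> mover t = v.
Proof. by move=> tL vn; case/andP: (moverP tL) => jn jinc; apply: inc_uniq. Qed.

Section Trajectory.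

Context {v : nat} (vn : (0 < v < n)%N).

Let v_neq0 := not_congr0 vn.

Lemma no_inc_outside t1 t2 : (1 <= t1)%N -> (t2 <= L.+1)%N ->
  ~~ (t1 <= inc1 v < t2)%N -> ~~ (t1 <= inc2 v < t2)%N ->
  forall t, (t1 <= t < t2)%N -> ~~ inc t v%:Z.
Proof. by move=> t1_ge1 t2L n1 n2 t tt; rewrite incE //; lia. Qed.

Lemma prod_from_after t : (inc2 v < t <= L.+1)%N -> P t v%:Z = v%:Z.
Proof.
move=> tL; have [? ? ?] := inc12 vn.
rewrite (@prod_from_const _ t L.+1) ?prod_from_end //; try lia.
by apply: no_inc_outside; lia.
Qed.

Lemma prod_from_between t :
  (inc1 v < t <= inc2 v)%N -> P t v%:Z = v%:Z + (a (inc2 v) - a (inc2 v).-1).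
Proof.
move=> tL; have [? ? ?] := inc12 vn.
rewrite (@prod_from_const _ t (inc2 v)) //; [|lia|lia|by apply: no_inc_outside; lia].
have inc2L : (1 <= inc2 v <= L)%N by lia.
have up : inc (inc2 v) v%:Z by rewrite incE // eqxx orbT.
have [_ ->] := step_up v_neq0 inc2L up.
by rewrite prod_from_after //; lia.
Qed.

Lemma prod_from_before t : (1 <= t <= inc1 v)%N -> P t v%:Z = v%:Z + n%:Z.
Proof.
move=> tL; have [? ? ?] := inc12 vn.
rewrite -(@prod_from_const _ 1 t) ?prod_lam ?lam_neq0 //; try lia.
by apply: no_inc_outside; lia.
Qed.

Lemma a_inc2_pred : congr n (a (inc2 v).-1) v%:Z.
Proof.
have [? ? ?] := inc12 vn; have inc2L : (1 <= inc2 v <= L)%N by lia.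
have up : inc (inc2 v) v%:Z by rewrite incE // eqxx orbT.
have [+ _] := step_up v_neq0 inc2L up.
by rewrite prod_from_after; [apply: congr_sym | lia].
Qed.

Lemma a_inc1_translate : exists s,
  a (inc1 v).-1 = a (inc2 v) + (s - 1) * n%:Z /\ a (inc1 v) = a (inc2 v).-1 + s * n%:Z.
Proof.
have [? ? ?] := inc12 vn; have inc1L : (1 <= inc1 v <= L)%N by lia.
have up : inc (inc1 v) v%:Z by rewrite incE // eqxx.
have [] := step_up v_neq0 inc1L up.
rewrite prod_from_between ?prod_from_before; try lia.
move=> /congrP [w ew] e1; have /congrP [z ez] := a_inc2_pred.
by exists (1 - z - w); split; lia.
Qed.

Lemma a_inc1 : congr n (a (inc1 v)) v%:Z.
Proof.
have [s [_ ->]] := a_inc1_translate.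
exact: congr_trans (congr_addMn _ _ _) a_inc2_pred.
Qed.

Lemma a_inc1_pred : congr n (a (inc1 v).-1) (a (inc2 v)).
Proof. by have [s [-> _]] := a_inc1_translate; apply: congr_addMn. Qed.

Lemma not_congr_stay {t} : (1 <= t <= L)%N -> t != inc1 v -> t != inc2 v ->
  ~ congr n (P t.+1 v%:Z) (a t.-1).
Proof.
move=> tL t1 t2; have stay : ~~ inc t v%:Z by rewrite incE // (negPf t1) (negPf t2).
by case: (step_stay v_neq0 tL stay).
Qed.

Lemma rr_inc1 : rr n a (inc1 v) =1 arefl n (a (inc2 v) - n%:Z) (a (inc2 v).-1).
Proof.
have [s [E1 E2]] := a_inc1_translate => x.
by rewrite /rr E1 E2 -[RHS](arefl_shift_ends _ _ _ _ s); congr arefl; lia.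
Qed.

Lemma rr_inc2 : rr n a (inc2 v) =1 arefl n (a (inc1 v) - n%:Z) (a (inc1 v).-1).
Proof.
have [s [E1 E2]] := a_inc1_translate => x.
by rewrite /rr E1 E2 -[LHS](arefl_shift_ends _ _ _ _ (s - 1)); congr arefl; lia.
Qed.

Lemma congr_a_inside m : (m <= L)%N -> congr n (a m) v%:Z -> (inc1 v <= m < inc2 v)%N.
Proof.
move=> mL amv; have [? ? ?] := inc12 vn; apply/negP => out.
have [mE|mL'] := eqVneq m L.
  by apply: v_neq0; apply: congr_trans (congr_sym amv) _; rewrite mE; apply: aL_congr0.
have [m1|] := eqVneq m.+1 (inc1 v).
  have inc2L : (1 <= inc2 v <= L)%N by lia.
  apply: (a_refl _ inc2L); apply: congr_trans a_inc2_pred _.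
  apply: congr_trans (congr_sym amv) _.
  by rewrite (_ : m = (inc1 v).-1); [apply: a_inc1_pred | lia].
move=> m1; have m1L : (1 <= m.+1 <= L)%N by lia.
apply: (not_congr_stay m1L m1); first by apply/eqP; lia.
have [m2|m2] := leqP m.+2 (inc1 v).
  rewrite prod_from_before; last by lia.
  by move/congrP: amv => [z ->]; apply/congrP; exists (1 - z); lia.
by rewrite prod_from_after; [apply: congr_sym | lia].
Qed.

Lemma not_congr_inside m : (inc1 v <= m < inc2 v)%N -> ~ congr n (a m) (a (inc2 v)).
Proof.
move=> mI; have [? ? ?] := inc12 vn.
have [m2|m2] := eqVneq m.+1 (inc2 v).
  by rewrite (_ : m = (inc2 v).-1); [apply: a_refl | ]; lia.
have m1L : (1 <= m.+1 <= L)%N by lia.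
move=> am2; apply: (not_congr_stay m1L); try (apply/eqP; lia).
rewrite prod_from_between /=; last by lia.
have /congrP [z ez] := a_inc2_pred; move/congrP: am2 => [w ew].
by apply/congrP; exists (- z - w); lia.
Qed.

End Trajectory.

(** * The tree of residue classes *)

(* [parent v] is the class beta_v of the paper; the classes form a tree rooted at 0. *)
Definition parent (v : nat) : nat := if (0 < v < n)%N then res (a (inc2 v)) else 0.

Lemma parent_interval {v} : (0 < v < n)%N -> parent v = 0 \/
  [/\ (0 < parent v < n)%N, (inc1 (parent v) < inc1 v)%N & (inc2 v < inc2 (parent v))%N].
Proof.
move=> vn; rewrite /parent vn; set w := res _.
have [->|w_neq0] := eqVneq w 0; [by left | right].
have wn : (0 < w < n)%N by have := residue_ltn (a (inc2 v)) n_gt0; lia.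
have [? ? ?] := inc12 vn.
have aw : congr n (a (inc2 v)) w by apply/congr_residue_small; lia.
have : (inc1 w <= inc2 v < inc2 w)%N by apply: (congr_a_inside wn) aw.
have : (inc1 w <= (inc1 v).-1 < inc2 w)%N.
  by apply: (congr_a_inside wn); [lia | apply: congr_trans (a_inc1_pred vn) aw].
by split; lia.
Qed.

Lemma iter_parent0 e : iter e parent 0 = 0.
Proof. by elim: e => //= e ->. Qed.

Lemma iter_parent_neq e v : (0 < v < n)%N -> iter e.+1 parent v != v.
Proof.
move=> vn; suff : iter e.+1 parent v = 0 \/
    (0 < iter e.+1 parent v < n)%N /\ (inc1 (iter e.+1 parent v) < inc1 v)%N.
  case=> [->|[_ lt1]]; first by rewrite eq_sym -lt0n; case/andP: vn.
  by apply: contraTneq lt1 => ->; rewrite ltnn.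
elim: e => [|e IH]; first by case: (parent_interval vn) => [|[]]; auto.
rewrite iterS; case: IH => [->|[IHn IH1]]; first by left.
by case: (parent_interval IHn) => [|[? ? _]]; [left | right; split => //; lia].
Qed.

Definition ancestor (u v : nat) : Prop := exists e, iter e parent v = u.

Lemma ancestor_trans u v w : ancestor u v -> ancestor v w -> ancestor u w.
Proof. by move=> [e1 <-] [e2 <-]; exists (e1 + e2)%N; rewrite iterD. Qed.

Lemma ancestor_parent {u v} : u != v -> ancestor u v <-> ancestor u (parent v).
Proof.
move=> uv; split => [[[|e] E]|[e E]]; last by exists e.+1; rewrite iterSr.
  by rewrite -E eqxx in uv.
by exists e; rewrite -iterSr.
Qed.

Lemma not_ancestor0 {u} : (0 < u < n)%N -> ~ ancestor u 0.
Proof. by move=> un [e]; rewrite iter_parent0 => u0; move: un; rewrite -u0. Qed.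

Lemma not_ancestor_parent {u} : (0 < u < n)%N -> ~ ancestor u (parent u).
Proof. by move=> un [e]; rewrite -iterSr; apply/eqP/iter_parent_neq. Qed.

Lemma step_edge {m} : (1 <= m <= L)%N -> let j := mover m in
  [/\ m = inc2 j, res (a m.-1) = j & res (a m) = parent j] \/
  [/\ m = inc1 j, res (a m.-1) = parent j & res (a m) = j].
Proof.
move=> mL j; have /andP [jn jinc] := moverP mL; rewrite /parent jn.
have jn' : (j < n)%N by case/andP: jn.
move: jinc; rewrite incE // => /orP [/eqP m1|/eqP m2]; [right|left]; split => //.
- by rewrite m1; apply/(congr_residue n_gt0); apply: a_inc1_pred.
- by rewrite m1; apply/congr_residue_small/a_inc1.
- by rewrite m2; apply/congr_residue_small/a_inc2_pred.
- by rewrite m2.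
Qed.

Lemma ancestor_res_a u m : (0 < u < n)%N -> (m <= L)%N ->
  ancestor u (res (a m)) <-> (inc1 u <= m < inc2 u)%N.
Proof.
move=> un mL; have [? ? ?] := inc12 un; rewrite -(subKn mL).
elim: (L - m)%N (leq_subr m L) => [|d IH] dL.
  rewrite subn0 (_ : res (a L) = 0); last by apply/congr_residue_small/aL_congr0; lia.
  by split => [/(not_ancestor0 un)//|]; lia.
rewrite (_ : (L - d.+1 = (L - d).-1)%N); last by lia.
have /(_ ltac:(lia)) := IH; set t := (L - d)%N => {}IH.
have tL : (1 <= t <= L)%N by lia.
have [e|e] := eqVneq (mover t) u.
  case: (step_edge tL); rewrite e => -[tE -> _].
    by split => _; [lia | exists 0%N].
  by split => [/(not_ancestor_parent un)//|]; lia.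
have [t1 t2] : t != inc1 u /\ t != inc2 u.
  by split; apply: contra_neq e => tE; apply: mover_inc => //; rewrite incE // tE eqxx ?orbT.
rewrite eq_sym in e.
case: (step_edge tL) => [[_ -> ta]|[_ -> ta]].
  by rewrite (ancestor_parent e) -ta IH; lia.
by rewrite -(ancestor_parent e) -ta IH; lia.
Qed.

Lemma ancestor_interval u v : (0 < u < n)%N -> (0 < v < n)%N -> ancestor u v ->
  (inc1 u <= inc1 v)%N /\ (inc2 v <= inc2 u)%N.
Proof.
move=> un vn uv; have [? ? ?] := inc12 vn.
have inside m : (inc1 v <= m < inc2 v)%N -> (inc1 u <= m < inc2 u)%N.
  move=> mI; rewrite -ancestor_res_a //; last by lia.
  by apply: ancestor_trans uv _; rewrite ancestor_res_a //; lia.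
by have := inside (inc1 v); have := inside (inc2 v).-1; lia.
Qed.

Lemma intervals_laminar u v m : (0 < u < n)%N -> (0 < v < n)%N ->
  (inc1 u <= m < inc2 u)%N -> (inc1 v <= m < inc2 v)%N ->
  (inc1 u <= inc1 v)%N /\ (inc2 v <= inc2 u)%N \/
  (inc1 v <= inc1 u)%N /\ (inc2 u <= inc2 v)%N.
Proof.
move=> un vn; have [? ? ?] := inc12 un.
move=> mu; have mL : (m <= L)%N by lia.
move: mu; rewrite -!ancestor_res_a //.
move=> [e1 E1] [e2 E2]; have [le12|le21] := leqP e1 e2.
  by right; apply: ancestor_interval => //; exists (e2 - e1)%N; rewrite -E1 -E2 -iterD subnK.
by left; apply: ancestor_interval => //; exists (e1 - e2)%N; rewrite -E1 -E2 -iterD subnK // ltnW.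
Qed.

(** * Partner reflections *)

Lemma mover_inc12 {v} : (0 < v < n)%N -> mover (inc1 v) = v /\ mover (inc2 v) = v.
Proof.
move=> vn; have [? ? ?] := inc12 vn.
by split; apply: mover_inc => //; rewrite ?incE ?eqxx ?orbT //; lia.
Qed.

Lemma mover_step {t} : (1 <= t <= L)%N -> (0 < mover t < n)%N /\
  (t = inc1 (mover t) \/ t = inc2 (mover t)).
Proof.
by move=> tL; have /andP [jn] := moverP tL; rewrite incE // => /orP [] /eqP; auto.
Qed.

Definition partner (t : nat) : nat :=
  if t == inc1 (mover t) then inc2 (mover t) else inc1 (mover t).

Lemma partner_step {t} : (1 <= t <= L)%N ->
  [/\ (1 <= partner t <= L)%N, mover (partner t) = mover t & partner (partner t) = t].
Proof.
move=> tL; have [jn tj] := mover_step tL; have [? ? ?] := inc12 jn.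
have [m1 m2] := mover_inc12 jn.
rewrite /partner; case: eqP => [t1|t1]; rewrite ?m1 ?m2 ?eqxx.
  by rewrite (_ : (inc2 _ == _) = false) //; [split => //; lia | apply/eqP; lia].
by case: tj => // t2; split => //; lia.
Qed.

Lemma rr_partner {t} : (1 <= t <= L)%N ->
  rr n a (partner t) =1 arefl n (a t - n%:Z) (a t.-1).
Proof.
move=> tL; have [jn tj] := mover_step tL.
rewrite /partner; set j := mover t in jn tj *; have [? ? ?] := inc12 jn.
case: tj => ->; first by rewrite eqxx; apply: rr_inc2.
by rewrite ifN; [apply: rr_inc1 | apply/eqP; lia].
Qed.

Lemma partner_inside k t : (0 < k < n)%N -> (inc1 k < t < inc2 k)%N ->
  (inc1 k < partner t < inc2 k)%N.
Proof.
move=> kn tk; have [? ? ?] := inc12 kn; have tL : (1 <= t <= L)%N by lia.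
have [jn tj] := mover_step tL; rewrite /partner; set j := mover t in jn tj *.
have [? ? ?] := inc12 jn; have [j1 j2] := mover_inc12 jn; have [k1 k2] := mover_inc12 kn.
have jk : j != k by apply/eqP => jk; rewrite jk in tj; lia.
have ne1 : inc1 j != inc1 k by apply: contra_neq jk => E; rewrite -j1 E k1.
have ne2 : inc2 j != inc2 k by apply: contra_neq jk => E; rewrite -j2 E k2.
have [] : (inc1 k <= inc1 j)%N /\ (inc2 j <= inc2 k)%N \/
          (inc1 j <= inc1 k)%N /\ (inc2 k <= inc2 j)%N.
  case: tj => tj; [apply: (@intervals_laminar k j t) | apply: (@intervals_laminar k j t.-1)];
  lia.
- by case: ifP; lia.
- by case: tj; lia.
Qed.

Lemma rr_congr_ends {t1 t2} : (1 <= t1 <= L)%N -> (1 <= t2 <= L)%N ->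
  rr n a t1 =1 rr n a t2 -> congr n (a t1.-1) (a t2.-1) /\ congr n (a t1) (a t2).
Proof.
move=> t1L t2L; have lt1 : a t1.-1 < a t1 by apply: a_lt; lia.
have lt2 : a t2.-1 < a t2 by apply: a_lt; lia.
move=> /(_ (a t1.-1)); rewrite {1}/rr arefl_l /rr.
case: areflP => [c|_ _|_ _] e; try lia.
by split; rewrite // e; apply: congr_subD.
Qed.

Lemma rr_inj t1 t2 : (1 <= t1 <= L)%N -> (1 <= t2 <= L)%N ->
  rr n a t1 =1 rr n a t2 -> t1 = t2.
Proof.
move=> t1L t2L /(rr_congr_ends t1L t2L) [/(congr_residue n_gt0) c1 /(congr_residue n_gt0) c2].
have /andP [j1n _] := moverP t1L.
have no_2cycle u : (0 < u < n)%N -> parent (parent u) != u := iter_parent_neq 1 u.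
case: (step_edge t1L) => [[e1 l1 r1]|[e1 l1 r1]];
  case: (step_edge t2L) => [[e2 l2 r2]|[e2 l2 r2]].
- by rewrite e1 e2 -l1 -l2 c1.
- by case/eqP: (no_2cycle _ j1n); rewrite -r1 c2 r2 -l2 -c1 l1.
- by case/eqP: (no_2cycle _ j1n); rewrite -l1 c1 l2 -r2 -c2 r1.
- by rewrite e1 e2 -r1 -r2 c2.
Qed.

Lemma increasing_stepsE {k p1 p2} : (0 < k < n)%N -> (p1 < p2)%N ->
  (forall l, (1 <= l <= L)%N -> (increases n a l k%:Z <-> l = p1 \/ l = p2)) ->
  p1 = inc1 k /\ p2 = inc2 k.
Proof.
move=> kn lt_p12 incs_k; have [? ? ?] := inc12 kn.
have /incs_k : inc (inc1 k) k%:Z by rewrite incE ?eqxx //; lia.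
have /incs_k : inc (inc2 k) k%:Z by rewrite incE ?eqxx ?orbT //; lia.
by lia.
Qed.

Lemma inside_iff_partner_inside {k l} : (0 < k < n)%N -> (1 <= l <= L)%N ->
  (inc1 k < l < inc2 k)%N <-> exists l', (inc1 k < l' < inc2 k)%N /\
    forall x, rr n a l' x = arefl n (a l - n%:Z) (a l.-1) x.
Proof.
move=> kn lL; have [pL _ ppl] := partner_step lL.
split => [lk|[l' [l'k rl']]].
  by exists (partner l); split; [apply: partner_inside | apply: rr_partner].
have [? ? ?] := inc12 kn.
have l'E : l' = partner l.
  by apply: rr_inj => // [|x]; [lia | rewrite rl' rr_partner].
by rewrite -ppl -l'E; apply: partner_inside.
Qed.

Lemma beta_congr_a_inc2 {k beta} : (0 < k < n)%N ->
  (congr n (a (inc1 k).-1) k%:Z /\ congr n (a (inc1 k)) beta) \/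
  (congr n (a (inc1 k)) k%:Z /\ congr n (a (inc1 k).-1) beta) ->
  congr n beta (a (inc2 k)).
Proof.
move=> kn [[k1 _]|[_ beta1]]; last exact: congr_trans (congr_sym beta1) (a_inc1_pred kn).
have [? ? ?] := inc12 kn.
by case: (a_refl (inc1 k) _); [lia | apply: congr_trans k1 (congr_sym (a_inc1 kn))].
Qed.

End TreeLikeFactorization.

Theorem corollary3p11 (n : nat) (a : nat -> int) (k : nat) (p1 p2 : nat)
    (beta : int) :
  (2 <= n)%N ->
  (* a_0 < a_1 < ... < a_{2n-2} *)
  (forall l, (l < flen n)%N -> a l < a l.+1) ->
  (* each r_l = ((a_{l-1}, a_l)) is an affine reflection *)
  (forall l, (1 <= l <= flen n)%N -> ~ congr n (a l.-1) (a l)) ->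
  (* r_1 ... r_{2n-2} = lambda_n *)
  (forall x : int, prod_from n a 1 x = lam n x) ->
  (1 <= k <= n - 1)%N ->
  (* r^k_1 = r_{p1}, r^k_2 = r_{p2}: the two reflections increasing k *)
  (p1 < p2)%N ->
  (forall l, (1 <= l <= flen n)%N ->
     (increases n a l k%:Z <-> l = p1 \/ l = p2)) ->
  (* beta is (a representative of) beta_k: the endpoint of r^k_1 other than
     the one congruent to k *)
  ((congr n (a p1.-1) k%:Z /\ congr n (a p1) beta) \/
   (congr n (a p1) k%:Z /\ congr n (a p1.-1) beta)) ->
  (* (i) *)
  (forall l, (1 <= l <= flen n)%N -> (l < p1)%N \/ (p2 < l)%N ->
     ~ congr n (a l.-1) k%:Z /\ ~ congr n (a l) k%:Z) /\
  (* (ii) *)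
  (forall l, (p1 < l < p2)%N ->
     ~ congr n (a l.-1) beta /\ ~ congr n (a l) beta) /\
  (* (iii) *)
  (forall l, (1 <= l <= flen n)%N ->
     ((p1 < l < p2)%N <->
      exists l', (p1 < l' < p2)%N /\
        forall x : int, rr n a l' x = arefl n (a l - n%:Z) (a l.-1) x)).
Proof.
move=> n_ge2 a_incr a_refl prod_lam k_range lt_p12 incs_k beta_k.
have kn : (0 < k < n)%N by lia.
have [p1E p2E] := increasing_stepsE n_ge2 a_incr a_refl prod_lam kn lt_p12 incs_k.
subst p1 p2; have [? ? ?] := inc12 n_ge2 a_incr a_refl prod_lam kn.
have beta_E := beta_congr_a_inc2 n_ge2 a_incr a_refl prod_lam kn beta_k.
have k_inside := congr_a_inside n_ge2 a_incr a_refl prod_lam kn.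
have beta_not_inside := not_congr_inside n_ge2 a_incr a_refl prod_lam kn.
split; [|split].
- by move=> l lL out; split => /k_inside; lia.
- by move=> l lk; split => /congr_trans/(_ beta_E); apply: beta_not_inside; lia.
- by move=> l lL; apply: inside_iff_partner_inside.
Qed.
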